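(* Let $k,n$ be integers with $2\le k\le n$. Then $d^E_3(n,k)\le \max\{d^E_3(n-1,k-1),\,d^E_3(n-2,k-2)\}$.
   Context: For $k\le n$, $d^E_3(n,k)$ denotes the largest minimum distance among all ternary Euclidean LCD $[n,k]$ codes, i.e. $k$-dimensional subspaces $C\subseteq\mathbb{F}_3^n$ with $C\cap C^{\perp_E}=\{0\}$, where $C^{\perp_E}$ is the dual with respect to $\langle x,y\rangle_E=\sum x_iy_i$. *)

From mathcomp Require Import all_boot all_order all_algebra.
Set Implicit Arguments. Unset Strict Implicit. Unset Printing Implicit Defensive.
Import GRing.Theory.
Local Open Scope ring_scope.

Notation F3 := ('F_3).

Definition wt (n : nat) (u : 'rV[F3]_n) : nat := #|[set i | u 0 i != 0]|.

(* A linear [n,k] code is the row space of a row-free k x n generator matrix G.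
   Its Euclidean dual is the row space of kermx G^T (all u with u *m G^T = 0,
   i.e. u orthogonal to every row of G). *)
Definition euclid_dual (k n : nat) (G : 'M[F3]_(k, n)) : 'M[F3]_n := kermx G^T.

Definition is_LCD (k n : nat) (G : 'M[F3]_(k, n)) : bool :=
  \rank (G :&: euclid_dual G)%MS == 0%N.

(* Minimum distance: least weight of a nonzero codeword (convention: 0 for
   the zero code, which has no nonzero codewords). *)
Definition min_dist (k n : nat) (G : 'M[F3]_(k, n)) : nat :=
  if [exists u : 'rV[F3]_n, (u <= G)%MS && (u != 0)]
  then \big[minn/n]_(u : 'rV[F3]_n | (u <= G)%MS && (u != 0)) wt u
  else 0%N.

Definition dE3 (n k : nat) : nat :=
  \max_(G : 'M[F3]_(k, n) | row_free G && is_LCD G) min_dist G.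

(* Let G generate an LCD [n,k] code C. Its Gram matrix M = G G^T is invertible,
   and P = G^T M^-1 G is the orthogonal projection onto C. Shortening C on a set
   S of coordinates (keep the codewords vanishing on S, then delete S) does not
   decrease the minimum distance, and the result is again LCD as soon as the
   S x S block of P is invertible. If some P_ii is nonzero, shorten on {i}.
   Otherwise tr P = k vanishes in F_3, so 3 divides k >= 2; and P is a nonzero symmetric
   matrix with zero diagonal, so some P_ij <> 0 with i <> j, and the block
   [[0, P_ij], [P_ij, 0]] is invertible: shorten on {i, j}. *)

From mathcomp Require Import all_boot all_order all_algebra.
From mathcomp Require Import zify.
Set Implicit Arguments. Unset Strict Implicit. Unset Printing Implicit Defensive.
Import Order.TTheory GRing.Theory.
Local Open Scope ring_scope.

Section Forms.
Variable F : fieldType.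

Lemma mxrank_ker_nondeg k p (B : 'M[F]_k) (E : 'M[F]_(k, p)) :
  E^T *m B *m E \in unitmx -> \rank (kermx E) = (k - p)%N.
Proof.
move=> uN; rewrite mxrank_ker; congr (k - _)%N; apply/eqP.
rewrite eqn_leq rank_leq_col -{1}(mxrank_unit uN).
exact: mxrankM_maxr.
Qed.

Lemma nondeg_kernel_basis k p (M : 'M[F]_k) (E : 'M[F]_(k, p)) :
  M \in unitmx -> M^T = M -> E^T *m invmx M *m E \in unitmx ->
  exists A : 'M[F]_(k - p, k),
    [/\ row_free A, A *m E = 0 & A *m M *m A^T \in unitmx].
Proof.
move=> uM sM uN; rewrite -(mxrank_ker_nondeg uN).
set A := row_base (kermx E).
have AE : A *m E = 0 by apply/sub_kermxP; rewrite eq_row_base.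
exists A; split=> //; first exact: row_base_free.
rewrite -row_free_unit; apply/inj_row_free => v vAMA.
apply: (row_free_inj (row_base_free (kermx E))); rewrite mul0mx.
set z := v *m A; rewrite 2!mulmxA -/z in vAMA.
have zE : z *m E = 0 by rewrite -mulmxA AE mulmx0.
suff zM : z *m M = 0 by rewrite -[z](mulmxK uM) zM mul0mx.
(* [R] is a projection with [R *m E = E]. The vector [z *m M] is orthogonal to
   the rows of [1 - R], which lie in [kermx E], and to those of [R], because
   [z *m E = 0]; as [(1 - R) + R = 1], it vanishes. *)
pose R := E *m invmx (E^T *m invmx M *m E) *m E^T *m invmx M.
have complR_E : (1%:M - R) *m E = 0.
  by rewrite mulmxBl mul1mx -!mulmxA [E^T *m _]mulmxA mulVmx // mulmx1 subrr.
have zM_complR : z *m M *m (1%:M - R)^T = 0.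
  have complR_ker : (1%:M - R <= A)%MS by rewrite eq_row_base; apply/sub_kermxP.
  by rewrite -(mulmxKpV complR_ker) trmx_mul mulmxA vAMA mul0mx.
have zMR : z *m M *m R^T = 0.
  rewrite !trmx_mul trmx_inv sM trmxK !mulmxA -(mulmxA z) mulmxV // mulmx1 zE.
  by rewrite !mul0mx.
rewrite -[z *m M]mulmx1 -[1%:M]trmx1 -(subrK R 1%:M) linearD /=.
by rewrite mulmxDr zM_complR zMR addr0.
Qed.

Lemma unitmx_hollow2 (B : 'M[F]_2) :
  B 0 0 = 0 -> B 1 1 = 0 -> B 0 1 != 0 -> B 1 0 != 0 -> B \in unitmx.
Proof.
move=> B00 B11 B01 B10; rewrite -row_free_unit; apply/inj_row_free => v vB.
have vB_col c : v 0 0 * B 0 c + v 0 1 * B 1 c = 0.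
  move/matrixP/(_ 0 c): vB; rewrite !mxE big_ord_recl big_ord1.
  by have -> : lift ord0 ord0 = 1 :> 'I_2 by apply: val_inj.
have /eqP := vB_col 0; rewrite B00 mulr0 add0r mulf_eq0 (negbTE B10) orbF => /eqP v1.
have /eqP := vB_col 1; rewrite B11 mulr0 addr0 mulf_eq0 (negbTE B01) orbF => /eqP v0.
apply/rowP => -[[|[|//]] c_lt2]; rewrite mxE; [rewrite -v0 | rewrite -v1].
all: by congr (v 0 _); apply: val_inj.
Qed.

Lemma mxsub2_hollow_unit n (P : 'M[F]_n) i j :
  P i i = 0 -> P j j = 0 -> P i j != 0 -> P j i != 0 ->
  mxsub (tnth [tuple i; j]) (tnth [tuple i; j]) P \in unitmx.
Proof. by move=> Pii Pjj Pij Pji; apply: unitmx_hollow2; rewrite !mxE. Qed.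

Lemma gram_col'_zero m n (X : 'M[F]_(m, n.+1)) i :
  (forall b, X b i = 0) -> col' i X *m (col' i X)^T = X *m X^T.
Proof.
move=> Xi0; apply/matrixP => a b; rewrite !mxE [RHS](bigD1_ord i) //=.
rewrite !mxE Xi0 mul0r add0r; apply: eq_bigr => j _; by rewrite !mxE.
Qed.

Section OrthogonalProjection.
Variables k n : nat.
Variable G : 'M[F]_(k, n).
Hypothesis uM : G *m G^T \in unitmx.

Definition orthoproj : 'M[F]_n := G^T *m invmx (G *m G^T) *m G.

Lemma mxtrace_orthoproj : \tr orthoproj = k%:R.
Proof. by rewrite /orthoproj mxtrace_mulC !mulmxA mulmxV // mxtrace1. Qed.

Lemma orthoproj_neq0 : (0 < k)%N -> orthoproj != 0.
Proof.
move=> k_gt0; apply: contraTneq k_gt0 => P0.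
have : G *m orthoproj *m G^T = G *m G^T.
  by rewrite /orthoproj !mulmxA mulmxV // mul1mx.
rewrite P0 mulmx0 mul0mx => /(congr1 mxrank).
by rewrite mxrank0 mxrank_unit // => <-.
Qed.

Lemma orthoproj_sym i j : orthoproj j i = orthoproj i j.
Proof.
have sP : orthoproj^T = orthoproj.
  by rewrite /orthoproj !trmx_mul trmxK trmx_inv trmx_mul trmxK mulmxA.
by rewrite -[in LHS]sP mxE.
Qed.

Lemma mxsub_orthoproj p (f : 'I_p -> 'I_n) :
  mxsub f f orthoproj = (colsub f G)^T *m invmx (G *m G^T) *m colsub f G.
Proof. by rewrite /orthoproj mxsub_mul -mul_rowsub_mx trmx_mxsub. Qed.

End OrthogonalProjection.

End Forms.

Lemma LCD_gramP k n (G : 'M[F3]_(k, n)) :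
  (row_free G && is_LCD G) = (G *m G^T \in unitmx).
Proof.
rewrite /is_LCD mxrank_eq0; apply/idP/idP => [/andP[rG /eqP hull0] | uM].
  rewrite -row_free_unit; apply/inj_row_free => v vM.
  apply: (row_free_inj rG); rewrite mul0mx; apply/eqP.
  rewrite -submx0 -hull0 sub_capmx submxMl /euclid_dual sub_kermx.
  by rewrite -mulmxA vM /=.
have rG : row_free G.
  apply/inj_row_free => v vG.
  by rewrite -[v](mulmxK uM) mulmxA vG !mul0mx.
rewrite rG /=; set C := (G :&: euclid_dual G)%MS.
have CG : C *m pinvmx G *m G = C by apply/mulmxKpV/capmxSl.
have CGT : C *m G^T = 0 by apply/sub_kermxP/capmxSr.
have CpG0 : C *m pinvmx G = 0.
  by rewrite -(mulmxK uM (C *m pinvmx G)) mulmxA CG CGT mul0mx.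
by rewrite -CG CpG0 mul0mx.
Qed.

Definition nonzero_wt_ge m n (X : 'M[F3]_(m, n)) (d : nat) : Prop :=
  forall y : 'rV_m, y != 0 -> (d <= wt (y *m X))%N.

Lemma wt_le_size n (u : 'rV[F3]_n) : (wt u <= n)%N.
Proof. by rewrite /wt (leq_trans (max_card _)) // card_ord. Qed.

Lemma wt_col'_zero n (u : 'rV[F3]_n.+1) i : u 0 i = 0 -> wt (col' i u) = wt u.
Proof.
move=> ui0; rewrite /wt -!sum1dep_card [RHS]big_mkcond [RHS](bigD1_ord i) //=.
by rewrite ui0 eqxx add0n big_mkcond; apply: eq_bigr => j _; rewrite !mxE.
Qed.

Lemma nonzero_wt_ge_col' m n (X : 'M[F3]_(m, n.+1)) i d :
  (forall b, X b i = 0) -> nonzero_wt_ge X d -> nonzero_wt_ge (col' i X) d.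
Proof.
move=> Xi0 wtX y y0; rewrite col'Esub mulmx_colsub -col'Esub wt_col'_zero ?wtX //.
by rewrite mxE big1 // => b _; rewrite Xi0 mulr0.
Qed.

Lemma min_dist_le_wt k n (G : 'M[F3]_(k, n)) (y : 'rV_k) :
  row_free G -> y != 0 -> (min_dist G <= wt (y *m G))%N.
Proof.
move=> rG y0; have yG0 : y *m G != 0 by rewrite mulmx_free_eq0.
have yG_code : (y *m G <= G)%MS && (y *m G != 0) by rewrite submxMl.
rewrite /min_dist; case: ifP => // _.
exact: (@bigmin_le_cond _ nat _ n (y *m G) _ (@wt n) yG_code).
Qed.

Lemma nonzero_wt_ge_min_dist k n (G : 'M[F3]_(k, n)) d :
  (0 < k)%N -> row_free G -> nonzero_wt_ge G d -> (d <= min_dist G)%N.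
Proof.
move=> k_gt0 rG wtG.
pose y : 'rV[F3]_k := delta_mx 0 (Ordinal k_gt0).
have y0 : y != 0.
  apply/eqP => /matrixP/(_ 0 (Ordinal k_gt0)).
  by rewrite !mxE eqxx => /eqP; rewrite oner_eq0.
have yG0 : y *m G != 0 by rewrite mulmx_free_eq0.
rewrite /min_dist; case: ifPn => [_ | /existsPn/(_ (y *m G))]; last first.
  by rewrite submxMl yG0.
apply: (@le_bigmin _ nat) => [|u /andP[uG u0]].
  exact: leq_trans (wtG y y0) (wt_le_size _).
rewrite -(mulmxKpV uG); apply: wtG; apply: contra u0 => /eqP uG0.
by rewrite -(mulmxKpV uG) uG0 mul0mx.
Qed.

Lemma min_dist_le_dE3 k n (G : 'M[F3]_(k, n)) :
  row_free G -> is_LCD G -> (min_dist G <= dE3 n k)%N.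
Proof.
move=> rG lG; apply: (@leq_bigmax_cond _ (fun G : 'M_(k, n) => row_free G && is_LCD G)).
by rewrite rG lG.
Qed.

Lemma nonzero_wt_ge_dE3 m n (X : 'M[F3]_(m, n)) d :
  (0 < m)%N -> X *m X^T \in unitmx -> nonzero_wt_ge X d -> (d <= dE3 n m)%N.
Proof.
rewrite -LCD_gramP => m_gt0 /andP[rX lX] wtX.
exact: leq_trans (nonzero_wt_ge_min_dist m_gt0 rX wtX) (min_dist_le_dE3 rX lX).
Qed.

Lemma shorten_LCD k n p (G : 'M[F3]_(k, n)) (f : 'I_p -> 'I_n) :
  row_free G -> is_LCD G -> mxsub f f (orthoproj G) \in unitmx ->
  exists X : 'M[F3]_(k - p, n),
    [/\ X *m X^T \in unitmx, colsub f X = 0 & nonzero_wt_ge X (min_dist G)].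
Proof.
move=> rG lG; have uM : G *m G^T \in unitmx by rewrite -LCD_gramP rG.
have sM : (G *m G^T)^T = G *m G^T by rewrite trmx_mul trmxK.
rewrite mxsub_orthoproj => uN.
have [A [rA AE uA]] := nondeg_kernel_basis uM sM uN.
exists (A *m G); split.
- by rewrite trmx_mul !mulmxA in uA *.
- by rewrite -mulmx_colsub AE.
- by move=> y y0; rewrite mulmxA min_dist_le_wt // mulmx_free_eq0.
Qed.

Lemma min_dist_shorten1 k n (G : 'M[F3]_(k, n.+1)) i :
  (1 < k)%N -> row_free G -> is_LCD G -> orthoproj G i i != 0 ->
  (min_dist G <= dE3 n k.-1)%N.
Proof.
move=> k_gt1 rG lG Pii.
have uN : mxsub (fun _ : 'I_1 => i) (fun _ => i) (orthoproj G) \in unitmx.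
  by rewrite unitmxE det_mx11 mxE unitfE.
have [X [uX /matrixP Xf0 wtX]] := shorten_LCD rG lG uN.
have Xi0 b : X b i = 0 by have := Xf0 b 0; rewrite !mxE.
rewrite -subn1; apply: (@nonzero_wt_ge_dE3 _ _ (col' i X)).
- by rewrite subn_gt0.
- by rewrite gram_col'_zero.
- exact: nonzero_wt_ge_col'.
Qed.

Lemma min_dist_shorten2 k n (G : 'M[F3]_(k, n.+2)) i j :
  (2 < k)%N -> row_free G -> is_LCD G ->
  orthoproj G i i = 0 -> orthoproj G j j = 0 -> orthoproj G i j != 0 ->
  (min_dist G <= dE3 n k.-2)%N.
Proof.
move=> k_gt2 rG lG Pii Pjj Pij.
have neq_ij : i != j by apply: contraNneq Pij => eq_ij; rewrite -eq_ij Pii.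
have uN : mxsub (tnth [tuple i; j]) (tnth [tuple i; j]) (orthoproj G) \in unitmx.
  by apply: mxsub2_hollow_unit; rewrite // orthoproj_sym.
have [X [uX /matrixP Xij0 wtX]] := shorten_LCD rG lG uN.
have Xi0 b : X b i = 0 by have := Xij0 b 0; rewrite !mxE.
have [j' lift_j' _] := unlift_some neq_ij.
have Xj'0 b : col' i X b j' = 0 by have := Xij0 b 1; rewrite !mxE lift_j'.
rewrite -subn2; apply: (@nonzero_wt_ge_dE3 _ _ (col' j' (col' i X))).
- by rewrite subn_gt0.
- by rewrite !gram_col'_zero.
- by apply: nonzero_wt_ge_col' => //; apply: nonzero_wt_ge_col'.
Qed.

Lemma dvdn3_dim_hollow_orthoproj k n (G : 'M[F3]_(k, n)) :
  G *m G^T \in unitmx -> (forall i, orthoproj G i i = 0) -> (3 %| k)%N.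
Proof.
move=> uM Pdiag0; have := mxtrace_orthoproj uM.
rewrite /mxtrace big1 // => /esym/eqP.
by rewrite -(dvdn_pcharf (pchar_Fp _)).
Qed.

Theorem corollary5p4 (n k : nat) :
  (2 <= k)%N -> (k <= n)%N ->
  (dE3 n k <= maxn (dE3 n.-1 k.-1) (dE3 n.-2 k.-2))%N.
Proof.
move=> k_ge2; case: n => [|[|n]] k_le_n; try lia.
apply/bigmax_leqP => G /andP[rG lG] /=; rewrite leq_max.
have uM : G *m G^T \in unitmx by rewrite -LCD_gramP rG.
have [i Pii | Pdiag0] := pickP [pred i | orthoproj G i i != 0].
  by rewrite (min_dist_shorten1 k_ge2 rG lG Pii).
have {}Pdiag0 i : orthoproj G i i = 0 by apply/eqP/negbFE/Pdiag0.
have k_gt2 : (2 < k)%N.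
  by have := dvdn3_dim_hollow_orthoproj uM Pdiag0; lia.
have /matrix0Pn[i [j Pij]] := orthoproj_neq0 uM (ltnW (ltnW k_gt2)).
by rewrite (min_dist_shorten2 k_gt2 rG lG (Pdiag0 i) (Pdiag0 j) Pij) orbT.
Qed.
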